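(* Let $X$ be an abstract simplicial complex with a simplicial action of a finite group $G$ that restricts to an action on a subcomplex $A$ (not necessarily full). Then there is a $G$-equivariant homotopy equivalence $|X|-|A|\simeq_G|X\ominus A|$.
   Context: Simplicial difference $X\ominus A$: vertices are the simplices of $X$ not in $A$ that are minimal (under inclusion) among simplices of $X$ not in $A$; a finite nonempty set $\{\sigma_0,\dots,\sigma_d\}$ of these is a simplex iff $\sigma_0\cup\dots\cup\sigma_d$ is a simplex of $X$. $G$ acts simplicially on $X\ominus A$ through its action on simplices of $X$, and topologically on $|X|-|A|$ through the realization of the action on $X$. A $G$-homotopy equivalence is a $G$-map admitting a $G$-map inverse up to $G$-equivariant homotopies. *)

From mathcomp Require Import all_boot all_order all_algebra all_fingroup.
From mathcomp Require Import boolp classical_sets cardinality fsbigop reals.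

Set Implicit Arguments.
Unset Strict Implicit.
Unset Printing Implicit Defensive.

Import Order.TTheory GRing.Theory Num.Theory.
Local Open Scope classical_set_scope.
Local Open Scope ring_scope.

Definition is_simplicial_complex {V : Type} (X : set (set V)) : Prop :=
  (forall s, X s -> finite_set s /\ s !=set0) /\
  (forall s t, X s -> t `<=` s -> t !=set0 -> X t).

Definition is_subcomplex {V : Type} (A X : set (set V)) : Prop :=
  is_simplicial_complex A /\ A `<=` X.

Definition is_group_action {G : finGroupType} {V : Type} (act : G -> V -> V) : Prop :=
  (forall v, act 1%g v = v) /\
  (forall g h v, act (g * h)%g v = act g (act h v)).

Definition preserves_complex {G : finGroupType} {V : Type} (act : G -> V -> V)
  (X : set (set V)) : Prop :=
  forall g s, X s -> X (act g @` s).

Definition simplex_act {G : finGroupType} {V : Type} (act : G -> V -> V)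
  (g : G) (s : set V) : set V := act g @` s.

(** * Geometric realization.
    A point of |X| is a function t : V -> R (barycentric coordinates),
    nonnegative, whose support is a simplex of X, with coordinates summing to 1. *)
Definition supp {R : realType} {V : Type} (t : V -> R) : set V :=
  [set v | t v != 0].

Definition realization {R : realType} {V : choiceType} (X : set (set V)) :
  set (V -> R) :=
  [set t | (forall v, 0 <= t v) /\ X (supp t) /\ \sum_(v \in supp t) t v = 1].

Definition closed_simplex {R : realType} {V : choiceType} (X : set (set V))
  (s : set V) : set (V -> R) :=
  [set t | realization X t /\ supp t `<=` s].

(** U is open in the Euclidean topology of the closed simplex P = |s|
    (coordinates outside s vanish on P, so the sup-distance over s is a metric
    inducing the Euclidean topology). *)
Definition rel_open_simplex {R : realType} {V : Type} (P : set (V -> R))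
  (s : set V) (U : set (V -> R)) : Prop :=
  forall t, P t -> U t -> exists e : R, 0 < e /\
    forall u, P u -> (forall v, s v -> `|u v - t v| < e) -> U u.

(** Open sets of |X| for the weak (coherent) topology: U is open iff its
    intersection with every closed simplex is open in that simplex. *)
Definition realization_open {R : realType} {V : choiceType} (X : set (set V))
  (U : set (V -> R)) : Prop :=
  U `<=` realization X /\
  forall s, X s -> rel_open_simplex (closed_simplex X s) s U.

(** Realization of a simplicial action: g . t = sum_v t_v (g v),
    i.e. (g . t)(w) = t (g^-1 w). *)
Definition real_act {R : realType} {G : finGroupType} {V : Type}
  (act : G -> V -> V) (g : G) (t : V -> R) : V -> R :=
  fun w => t (act (g^-1)%g w).

(** * Lightweight topological spaces: a carrier subset S of a type T together
    with a predicate O of open sets (all contained in S). *)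
Definition sub_open {T : Type} (O : set T -> Prop) (S' : set T) (W : set T) : Prop :=
  exists U, O U /\ W = U `&` S'.

Definition cont {T1 T2 : Type} (S1 : set T1) (O1 : set T1 -> Prop)
  (S2 : set T2) (O2 : set T2 -> Prop) (f : T1 -> T2) : Prop :=
  (forall x, S1 x -> S2 (f x)) /\
  (forall W, O2 W -> O1 (S1 `&` f @^-1` W)).

(** The product [0,1] x S, with the product topology. *)
Definition cyl {R : realType} {T : Type} (S : set T) : set (R * T) :=
  [set p | 0 <= p.1 <= 1 /\ S p.2].

Definition cyl_open {R : realType} {T : Type} (S : set T) (O : set T -> Prop)
  (W : set (R * T)) : Prop :=
  W `<=` cyl S /\
  forall p, W p -> exists e : R, 0 < e /\ exists U, O U /\ U p.2 /\
    forall s x, 0 <= s <= 1 -> `|s - p.1| < e -> U x -> W (s, x).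

Definition equivariant {G : finGroupType} {T1 T2 : Type} (S1 : set T1)
  (a1 : G -> T1 -> T1) (a2 : G -> T2 -> T2) (f : T1 -> T2) : Prop :=
  forall g x, S1 x -> f (a1 g x) = a2 g (f x).

Definition G_homotopic {R : realType} {G : finGroupType} {T1 T2 : Type}
  (S1 : set T1) (O1 : set T1 -> Prop) (a1 : G -> T1 -> T1)
  (S2 : set T2) (O2 : set T2 -> Prop) (a2 : G -> T2 -> T2)
  (f f' : T1 -> T2) : Prop :=
  exists H : R * T1 -> T2,
    cont (cyl S1) (cyl_open S1 O1) S2 O2 H /\
    (forall x, S1 x -> H (0, x) = f x /\ H (1, x) = f' x) /\
    (forall g s x, 0 <= s <= 1 -> S1 x -> H (s, a1 g x) = a2 g (H (s, x))).

Definition G_homotopy_equivalent {R : realType} {G : finGroupType} {T1 T2 : Type}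
  (S1 : set T1) (O1 : set T1 -> Prop) (a1 : G -> T1 -> T1)
  (S2 : set T2) (O2 : set T2 -> Prop) (a2 : G -> T2 -> T2) : Prop :=
  exists (f : T1 -> T2) (h : T2 -> T1),
    cont S1 O1 S2 O2 f /\ cont S2 O2 S1 O1 h /\
    equivariant S1 a1 a2 f /\ equivariant S2 a2 a1 h /\
    @G_homotopic R G T1 T1 S1 O1 a1 S1 O1 a1 (fun x => h (f x)) id /\
    @G_homotopic R G T2 T2 S2 O2 a2 S2 O2 a2 (fun y => f (h y)) id.

Definition sdiff_vertex {V : Type} (X A : set (set V)) (s : set V) : Prop :=
  X s /\ ~ A s /\ (forall t, X t -> ~ A t -> t `<=` s -> t = s).

Definition sdiff {V : Type} (X A : set (set V)) : set (set (set V)) :=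
  [set S | finite_set S /\ S !=set0 /\ S `<=` sdiff_vertex X A /\
           X (\bigcup_(s in S) s)].

Definition diff_space {R : realType} {V : choiceType} (X A : set (set V)) :
  set (V -> R) :=
  realization X `&` ~` realization A.

From mathcomp Require Import all_boot all_order all_algebra all_fingroup.
From mathcomp Require Import boolp classical_sets functions cardinality fsbigop reals.
From mathcomp Require Import topology normedtype.
From mathcomp Require Import lra.
From mathcomp Require finmap.

Set Implicit Arguments.
Unset Strict Implicit.
Unset Printing Implicit Defensive.

Import Order.TTheory GRing.Theory Num.Theory.
Import numFieldNormedType.Exports.
Local Open Scope classical_set_scope.
Local Open Scope ring_scope.

(* The vertices of X ⊖ A are the minimal simplices r of X not in A.  For t in
   |X| - |A| the support of t is a simplex of X outside A, hence contains such
   an r, so the total weight D(t) = Σ_r Π_{v ∈ r} t_v is positive and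
   f(t) = (Π_{v ∈ r} t_v / D(t))_r is a point of |X ⊖ A| supported on the
   vertices below supp t.  Conversely h(T) = Σ_r T_r · (barycentre of r) lies
   in |X| - |A|, with support the union of the vertices in supp T.  Both maps
   commute with G, which permutes the vertices of X ⊖ A, and the straight-line
   homotopies from h ∘ f and f ∘ h to the identities stay in the right
   spaces, because along the segment the support only grows. *)

Section GroupAction.
Variables (G : finGroupType) (W : Type) (a : G -> W -> W).
Hypothesis ha : is_group_action a.

Lemma gactionVK g w : a (g^-1)%g (a g w) = w.
Proof. by case: ha => a1 aM; rewrite -aM mulVg a1. Qed.

Lemma gactionKV g w : a g (a (g^-1)%g w) = w.
Proof. by case: ha => a1 aM; rewrite -aM mulgV a1. Qed.

Lemma gaction_inj g : injective (a g).
Proof. exact: (can_inj (gactionVK g)). Qed.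

Lemma image_gactionE g (s : set W) w : (a g @` s) w <-> s (a (g^-1)%g w).
Proof.
split => [[y sy <-]|sw]; first by rewrite gactionVK.
by exists (a (g^-1)%g w) => //; rewrite gactionKV.
Qed.

Lemma image_gactionK g (s : set W) : a (g^-1)%g @` (a g @` s) = s.
Proof.
apply/seteqP; split => w.
  by move=> /image_gactionE; rewrite invgK => /image_gactionE; rewrite gactionVK.
by move=> sw; apply/image_gactionE; rewrite invgK; apply/image_gactionE; rewrite gactionVK.
Qed.
End GroupAction.

Lemma simplex_act_action (G : finGroupType) (V : Type) (act : G -> V -> V) :
  is_group_action act -> is_group_action (simplex_act act).
Proof.
move=> [act1 actM]; split => [s|g h s]; rewrite /simplex_act; apply/seteqP.
  by split => [x [y sy <-]|x sx]; [rewrite act1 | exists x; rewrite ?act1].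
split => x; first by case=> y sy <-; rewrite actM; exists (act h y) => //; exists y.
by case=> y [z sz <-] <-; exists z => //; rewrite actM.
Qed.

Lemma supp_real_act (R : realType) (G : finGroupType) (W : Type)
  (a : G -> W -> W) (ha : is_group_action a) g (t : W -> R) :
  supp (real_act a g t) = a g @` supp t.
Proof.
apply/seteqP; split => w; last by move=> /(image_gactionE ha).
by rewrite /supp /real_act /= => tw; apply/(image_gactionE ha).
Qed.

Section Points.
Variables (R : realType) (W : choiceType).
Implicit Types (x y : W -> R) (K : set (set W)).

Lemma supp_gt0 x v : (forall v, 0 <= x v) -> supp x v -> 0 < x v.
Proof. by move=> x0 xv; rewrite lt_neqAle eq_sym xv x0. Qed.

Lemma not_supp x v : ~ supp x v -> x v = 0.
Proof. by move=> xv; apply: contrapT => /eqP. Qed.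

Lemma realization_supp K x : realization K x -> K (supp x).
Proof. by case=> _ []. Qed.

Lemma realization_sum K x s :
  realization K x -> finite_set s -> supp x `<=` s -> \sum_(v \in s) x v = 1.
Proof.
move=> [_ [_ x1]] fs xs; rewrite -x1; apply/esym/fsbig_widen => // v [_].
exact: not_supp.
Qed.

Lemma sum_ge_term (I : choiceType) (P : set I) (F : I -> R) i :
  finite_set P -> P i -> (forall j, P j -> 0 <= F j) -> F i <= \sum_(j \in P) F j.
Proof.
move=> fP Pi F0; rewrite (fsbigD1 i) //= lerDl.
by apply: fsumr_ge0 => j [/F0].
Qed.

Definition conv (s : R) x y : W -> R := fun v => (1 - s) * x v + s * y v.

Lemma conv0 x y : conv 0 x y = x.
Proof. by apply/funext => v; rewrite /conv subr0 mul1r mul0r addr0. Qed.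

Lemma conv1 x y : conv 1 x y = y.
Proof. by apply/funext => v; rewrite /conv subrr mul0r add0r mul1r. Qed.

Lemma conv_closed_simplex K sg s x y :
  is_simplicial_complex K -> K sg -> 0 <= s <= 1 ->
  closed_simplex K sg x -> closed_simplex K sg y ->
  [/\ closed_simplex K sg (conv s x y),
      (s < 1 -> supp x `<=` supp (conv s x y)) &
      (0 < s -> supp y `<=` supp (conv s x y))].
Proof.
move=> [K1 K2] Ksg /andP[s0 s1] [rx sx] [ry sy].
have [x0 [Kx _]] := rx; have [y0 [Ky _]] := ry.
have c0 v : 0 <= conv s x y v by rewrite /conv addr_ge0 // mulr_ge0 // subr_ge0.
have csg : supp (conv s x y) `<=` sg.
  move=> v cv; apply: contrapT => nsv; move: cv; rewrite /supp /=.
  have xv : x v = 0 by apply: not_supp => /sx.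
  have yv : y v = 0 by apply: not_supp => /sy.
  by rewrite /conv xv yv !mulr0 addr0 eqxx.
have hx : s < 1 -> supp x `<=` supp (conv s x y).
  move=> s_lt1 v /(supp_gt0 x0) xv; rewrite /supp /conv /= gt_eqF //.
  by rewrite ltr_pwDl ?mulr_ge0 // mulr_gt0 // subr_gt0.
have hy : 0 < s -> supp y `<=` supp (conv s x y).
  move=> s_gt0 v /(supp_gt0 y0) yv; rewrite /supp /conv /= gt_eqF //.
  by rewrite ltr_wpDl ?mulr_ge0 ?subr_ge0 // mulr_gt0.
have fsg : finite_set sg by case: (K1 _ Ksg).
split => //; split => //; split => //; split.
  apply: (K2 _ _ Ksg csg).
  have [s_lt1|s_ge1] := ltP s 1.
    by have [v xv] := (K1 _ Kx).2; exists v; apply: hx.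
  by have [v yv] := (K1 _ Ky).2; exists v; apply: hy => //; lra.
rewrite (fsbig_widen _ sg) //; last by move=> v [_]; apply: not_supp.
rewrite /conv fsbig_split // -!mulr_fsumr.
by rewrite (realization_sum rx) // (realization_sum ry) // !mulr1 /= subrK.
Qed.
End Points.

Definition straight_homotopy (R : realType) (W : choiceType)
  (k : (W -> R) -> W -> R) (p : R * (W -> R)) : W -> R := conv p.1 (k p.2) p.2.

Lemma straight_homotopy_ends (R : realType) (W : choiceType)
  (k : (W -> R) -> W -> R) x :
  straight_homotopy k (0, x) = k x /\ straight_homotopy k (1, x) = x.
Proof. by rewrite /straight_homotopy conv0 conv1. Qed.

Lemma straight_homotopy_equivariant (R : realType) (G : finGroupType)
  (W : choiceType) (a : G -> W -> W) (k : (W -> R) -> W -> R) g s x :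
  (forall g x, k (real_act a g x) = real_act a g (k x)) ->
  straight_homotopy k (s, real_act a g x) = real_act a g (straight_homotopy k (s, x)).
Proof. by move=> hk; rewrite /straight_homotopy /= hk. Qed.

(* Finite subsets, using finmap's finite powerset (imported locally because
   its notations clash with those of classical_sets). *)
Module FiniteSubsets.
Import finmap.
Section FiniteSets.
Variable T : choiceType.

Lemma finite_subsets (s : set T) :
  finite_set s -> finite_set [set r : set T | r `<=` s].
Proof.
move=> fs.
have fB : finite_set ((fun F => [set` F]) @` [set` fpowerset (fset_set s)]).
  by apply: finite_image; apply: finite_fset.
apply: (sub_finite_set _ fB) => r /= rs.
have fr : finite_set r by apply: sub_finite_set fs.
exists (fset_set r); last by rewrite fset_setK.
by rewrite /= fpowersetE -fset_set_sub.
Qed.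

Lemma exists_minimal (P : set T -> Prop) (s : set T) : finite_set s -> P s ->
  exists r, [/\ P r, r `<=` s & forall t, P t -> t `<=` r -> t = r].
Proof.
pose n (t : set T) := size (enum_fset (fset_set t)).
suff: forall k s, (n s < k)%N -> finite_set s -> P s ->
    exists r, [/\ P r, r `<=` s & forall t, P t -> t `<=` r -> t = r].
  by apply; exact: ltnSn.
elim=> // k IH {}s sk fs Ps.
have [[t [Pt ts nts]]|no] := pselect (exists t, [/\ P t, t `<=` s & t <> s]).
  have ft : finite_set t by apply: sub_finite_set fs.
  have tks : (n t < n s)%N.
    apply: fproper_ltn_card; rewrite fproperEneq.
    apply/andP; split; last by rewrite -fset_set_sub.
    by apply/eqP => /(fset_set_inj ft fs).
  have [r [Pr rt rmin]] := IH t (leq_trans tks sk) ft Pt.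
  by exists r; split => //; apply: subset_trans ts.
exists s; split => // t Pt ts; apply: contrapT => nts.
by apply: no; exists t.
Qed.
End FiniteSets.
End FiniteSubsets.
Import FiniteSubsets.

Section Limits.
Variable R : realType.

Definition radius_filter (T : Type) (C : R -> set T) : set_system T :=
  filter_from [set d : R | 0 < d] C.

Lemma radius_filter_filter (T : Type) (C : R -> set T) :
  (forall d1 d2, 0 < d1 -> d1 <= d2 -> C d1 `<=` C d2) -> Filter (radius_filter C).
Proof.
move=> mon; apply: filter_from_filter; first by exists 1; rewrite /= ltr01.
move=> i j i0 j0; have m0 : 0 < Num.min i j by rewrite lt_min i0 j0.
exists (Num.min i j) => // t Ct.
by split; apply: (mon _ _ m0 _ _ Ct); rewrite ge_min lexx ?orbT.
Qed.

Lemma near_finite (T : Type) (F : set_system T) {FF : Filter F}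
  (I : choiceType) (s : set I) (Q : I -> T -> Prop) :
  finite_set s -> (forall i, s i -> \forall t \near F, Q i t) ->
  \forall t \near F, forall i, s i -> Q i t.
Proof.
move=> fs hQ; apply: filterS (@filter_bigI T I (fset_set s) Q F FF _).
  by move=> t hi i si; apply: hi; rewrite /= in_fset_set // inE.
by move=> i; rewrite in_fset_set // inE; apply: hQ.
Qed.

Lemma cvg_fsum (T : Type) (F : set_system T) {FF : Filter F} (I : choiceType)
  (s : set I) (f : I -> T -> R) (l : I -> R) :
  finite_set s -> (forall i, f i @ F --> l i) ->
  (fun t => \sum_(i \in s) f i t) @ F --> \sum_(i \in s) l i.
Proof.
move=> fs fl; rewrite fsbig_finite //; under eq_fun do rewrite fsbig_finite //.
by apply: cvg_big => //; exact: add_continuous.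
Qed.

Lemma cvg_fprod (T : Type) (F : set_system T) {FF : Filter F} (I : choiceType)
  (s : set I) (f : I -> T -> R) (l : I -> R) :
  finite_set s -> (forall i, f i @ F --> l i) ->
  (fun t => \big[*%R/1]_(i \in s) f i t) @ F --> \big[*%R/1]_(i \in s) l i.
Proof.
move=> fs fl; rewrite fsbig_finite //; under eq_fun do rewrite fsbig_finite //.
by apply: cvg_big => //; exact: mul_continuous.
Qed.

Lemma cvg_conv (T : Type) (F : set_system T) {FF : Filter F}
  (a b c : T -> R) (a0 b0 c0 : R) :
  a @ F --> a0 -> b @ F --> b0 -> c @ F --> c0 ->
  (fun t => (1 - a t) * b t + a t * c t) @ F --> (1 - a0) * b0 + a0 * c0.
Proof.
move=> ha hb hc; apply: cvgD; apply: cvgM => //.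
by apply: cvgB => //; exact: cvg_cst.
Qed.

Lemma segment_uniform (a b : R) (P : R -> R -> Prop) :
  (forall s, a <= s <= b -> exists2 d, 0 < d &
     forall s' d', `|s' - s| < d -> 0 < d' < d -> P d' s') ->
  exists2 d, 0 < d & forall s, a <= s <= b -> P d s.
Proof.
move=> loc.
have : \forall d \near 0^'+, `[a, b] `<=` P d.
  apply: ((compact_near_coveringP _).1 (@segment_compact R a b) R (0^'+) P _).
  move=> s; rewrite /= in_itv /= => /loc [d d0 hd].
  exists (ball s d, [set d' | 0 < d' < d]) => /=.
    split; first exact: nbhsx_ballx.
    exists d => // d' /=; rewrite /ball /= sub0r normrN => hd' d'0.
    by rewrite d'0 -(gtr0_norm d'0).
  by move=> [s' d'] [/= hs' d'd]; apply: hd => //; rewrite distrC.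
move=> [d /= d0 hd]; exists (d / 2); first by rewrite divr_gt0.
move=> s sab; apply: hd; last by rewrite /= in_itv.
  by rewrite /ball /= sub0r normrN gtr0_norm ?divr_gt0 //; lra.
by rewrite divr_gt0.
Qed.
End Limits.

Section RealizationMaps.
Variables (R : realType) (W1 W2 : choiceType)
  (K1 : set (set W1)) (K2 : set (set W2)).
Hypothesis hK2 : is_simplicial_complex K2.
Implicit Types (x : W1 -> R) (P : set (W1 -> R)) (sg : set W1) (s : R).

Definition simplex_ball (P : set (W1 -> R)) (sg : set W1) (x : W1 -> R) (d : R) :
  set (W1 -> R) := [set y | P y /\ forall v, sg v -> `|y v - x v| < d].

Definition cyl_ball (P : set (W1 -> R)) (sg : set W1) (s : R) (x : W1 -> R)
  (d : R) : set (R * (W1 -> R)) :=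
  [set p | 0 <= p.1 <= 1 /\ P p.2 /\ `|p.1 - s| < d /\
           forall v, sg v -> `|p.2 v - x v| < d].

Lemma simplex_ball_filter P sg x : Filter (radius_filter (simplex_ball P sg x)).
Proof.
apply: radius_filter_filter => d1 d2 _ d12 y [Py hy]; split => // v sv.
exact: lt_le_trans (hy v sv) d12.
Qed.

Lemma cyl_ball_filter P sg s x : Filter (radius_filter (cyl_ball P sg s x)).
Proof.
apply: radius_filter_filter => d1 d2 _ d12 y [y01 [Py [hs hy]]].
do 3!split => //; first exact: lt_le_trans hs d12.
by move=> v sv; exact: lt_le_trans (hy v sv) d12.
Qed.
Existing Instances simplex_ball_filter cyl_ball_filter.

Lemma closed_simplex_out sg x v : closed_simplex K1 sg x -> ~ sg v -> x v = 0.
Proof. by move=> [_ xs] nv; apply: not_supp => /xs. Qed.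

Lemma simplex_ball_coord P sg x v : P `<=` closed_simplex K1 sg ->
  closed_simplex K1 sg x ->
  (fun y : W1 -> R => y v) @ radius_filter (simplex_ball P sg x) --> x v.
Proof.
move=> PC xC; apply/cvgrPdist_lt => e e0; exists e => // y [Py hy].
have [sv|nsv] := pselect (sg v); first by rewrite distrC; apply: hy.
by rewrite (closed_simplex_out xC nsv) (closed_simplex_out (PC _ Py) nsv) subrr normr0.
Qed.

Lemma simplex_ball_supp P sg x : P `<=` closed_simplex K1 sg ->
  \forall y \near radius_filter (simplex_ball P sg x), supp y `<=` sg.
Proof. by move=> PC; exists 1 => //= y [/PC []]. Qed.

Lemma cyl_ball_coord P sg s x v : P `<=` closed_simplex K1 sg ->
  closed_simplex K1 sg x ->
  (fun p : R * (W1 -> R) => p.2 v) @ radius_filter (cyl_ball P sg s x) --> x v.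
Proof.
move=> PC xC; apply/cvgrPdist_lt => e e0; exists e => // p [_ [Pp [_ hy]]].
have [sv|nsv] := pselect (sg v); first by rewrite distrC; apply: hy.
by rewrite (closed_simplex_out xC nsv) (closed_simplex_out (PC _ Pp) nsv) subrr normr0.
Qed.

Lemma cyl_ball_fst P sg s x :
  (fun p : R * (W1 -> R) => p.1) @ radius_filter (cyl_ball P sg s x) --> s.
Proof.
by apply/cvgrPdist_lt => e e0; exists e => // p [_ [_ [hs _]]]; rewrite distrC.
Qed.

Lemma cyl_ball_supp P sg s x : P `<=` closed_simplex K1 sg ->
  \forall p \near radius_filter (cyl_ball P sg s x), supp p.2 `<=` sg.
Proof. by move=> PC; exists 1 => //= p [_ [/PC [] _]]. Qed.

Lemma cyl_ball_in P sg s x :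
  \forall p \near radius_filter (cyl_ball P sg s x), P p.2 /\ 0 <= p.1 <= 1.
Proof. by exists 1 => //= p [? [? _]]. Qed.

Lemma near_realization_open (T : Type) (F : set_system T) {FF : Filter F}
  (phi : T -> W2 -> R) (y : W2 -> R) (tau : set W2) (U : set (W2 -> R)) :
  (forall w, (fun t => phi t w) @ F --> y w) ->
  realization_open K2 U -> K2 tau -> closed_simplex K2 tau y -> U y ->
  \forall t \near F, closed_simplex K2 tau (phi t) -> U (phi t).
Proof.
move=> hc [_ Uop] Ktau ycl Uy; have [e [e0 he]] := Uop tau Ktau y ycl Uy.
have ftau : finite_set tau by case: (hK2.1 _ Ktau).
have : \forall t \near F, forall w, tau w -> `|phi t w - y w| < e.
  apply: near_finite => // w _; move/cvgrPdist_lt: (hc w) => /(_ e e0).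
  by apply: filterS => t; rewrite distrC.
by apply: filterS => t hn tcl; apply: he.
Qed.

Definition simplexwise_open (S : set (W1 -> R)) : Prop :=
  forall sg x, K1 sg -> S x -> closed_simplex K1 sg x ->
    exists2 d : R, 0 < d & forall y, closed_simplex K1 sg y ->
      (forall v, sg v -> `|y v - x v| < d) -> S y.

Lemma realization_simplexwise_open : simplexwise_open (realization K1).
Proof. by move=> sg x _ _ _; exists 1 => // y []. Qed.

Lemma realization_open_subspace :
  realization_open K1 = sub_open (realization_open K1) (@realization R W1 K1).
Proof.
apply/funext => U; apply/propext; split.
  move=> hU; exists U; split => //; apply/seteqP; split => [x Ux|x [] //].
  by split => //; exact: hU.1.
move=> [U' [[_ U'op] ->]]; split; first by move=> x [].
move=> sg Ksg t tcl [U't rt]; have [e [e0 he]] := U'op sg Ksg t tcl U't.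
by exists e; split => // u ucl hu; split; [exact: he | exact: ucl.1].
Qed.

Lemma cont_realization (S1 : set (W1 -> R)) (S2 : set (W2 -> R))
  (F : (W1 -> R) -> (W2 -> R)) :
  S1 `<=` realization K1 -> simplexwise_open S1 ->
  S2 `<=` realization K2 -> (forall x, S1 x -> S2 (F x)) ->
  (forall sg x, K1 sg -> S1 x -> closed_simplex K1 sg x ->
     exists tau, K2 tau /\ forall y, S1 y -> closed_simplex K1 sg y ->
       supp (F y) `<=` tau) ->
  (forall sg x, K1 sg -> S1 x -> closed_simplex K1 sg x -> forall w,
     (fun y => F y w) @ radius_filter (simplex_ball (S1 `&` closed_simplex K1 sg) sg x)
       --> F x w) ->
  cont S1 (sub_open (realization_open K1) S1) S2
    (sub_open (realization_open K2) S2) F.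
Proof.
move=> hS1 hS1o hS2 hmap himg hcvg; split; first exact: hmap.
move=> W [U [Uop ->]]; exists (S1 `&` F @^-1` (U `&` S2)); split; last first.
  by apply/seteqP; split => x; [move=> [S1x h]; split | move=> [[]]].
split; first by move=> x [/hS1].
move=> sg Ksg x xcl [S1x [Ux S2x]].
have [tau [Ktau hsupp]] := himg sg x Ksg S1x xcl.
have Fcl y : S1 y -> closed_simplex K1 sg y -> closed_simplex K2 tau (F y).
  by move=> S1y ycl; split; [apply: hS2; exact: hmap | exact: hsupp].
have [d d0 hd] :=
  near_realization_open (hcvg sg x Ksg S1x xcl) Uop Ktau (Fcl x S1x xcl) Ux.
have [d' d'0 hd'] := hS1o sg x Ksg S1x xcl.
exists (Num.min d d'); split => [|y ycl hy]; first by rewrite lt_min d0 d'0.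
have [yd yd'] : (forall v, sg v -> `|y v - x v| < d) /\
                (forall v, sg v -> `|y v - x v| < d').
  by split => v /hy; rewrite lt_min => /andP[].
have S1y := hd' y ycl yd'.
by do 2!split => //; [apply: (hd y) => //; exact: Fcl | exact: hmap].
Qed.

Section Cylinder.
Variables (S1 : set (W1 -> R)) (S2 : set (W2 -> R))
  (H : R * (W1 -> R) -> (W2 -> R)).
Hypotheses (hS1 : S1 `<=` realization K1) (hS1o : simplexwise_open S1)
  (hS2 : S2 `<=` realization K2)
  (hmap : forall s x, 0 <= s <= 1 -> S1 x -> S2 (H (s, x)))
  (himg : forall sg x, K1 sg -> S1 x -> closed_simplex K1 sg x ->
     exists tau, K2 tau /\ forall s y, 0 <= s <= 1 -> S1 y ->
       closed_simplex K1 sg y -> supp (H (s, y)) `<=` tau)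
  (hcvg : forall sg s x, K1 sg -> 0 <= s <= 1 -> S1 x ->
     closed_simplex K1 sg x -> forall w,
     (fun p => H p w) @ radius_filter (cyl_ball (S1 `&` closed_simplex K1 sg) sg s x)
       --> H (s, x) w).

Lemma cyl_local (U : set (W2 -> R)) sg s x :
  realization_open K2 U -> K1 sg -> 0 <= s <= 1 -> S1 x ->
  closed_simplex K1 sg x -> U (H (s, x)) ->
  exists2 d : R, 0 < d & forall s' y, 0 <= s' <= 1 -> S1 y ->
    closed_simplex K1 sg y -> `|s' - s| < d ->
    (forall v, sg v -> `|y v - x v| < d) -> U (H (s', y)).
Proof.
move=> Uop Ksg s01 S1x xcl Ux.
have [tau [Ktau hsupp]] := himg Ksg S1x xcl.
have Hcl s' y : 0 <= s' <= 1 -> S1 y -> closed_simplex K1 sg y ->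
    closed_simplex K2 tau (H (s', y)).
  by move=> s'01 S1y ycl; split; [apply: hS2; exact: hmap | exact: hsupp].
have [d d0 hd] := near_realization_open (hcvg Ksg s01 S1x xcl) Uop Ktau
  (Hcl _ _ s01 S1x xcl) Ux.
exists d => // s' y s'01 S1y ycl hs hy.
apply: (hd (s', y)); last exact: Hcl.
by split.
Qed.

(* The compactness of [a, b] turns the pointwise
   estimates of cyl_local into one radius. *)
Lemma tube_open (U : set (W2 -> R)) (a b : R) :
  realization_open K2 U -> (forall s, a <= s <= b -> 0 <= s <= 1) ->
  sub_open (realization_open K1) S1
    [set x | S1 x /\ forall s, a <= s <= b -> U (H (s, x))].
Proof.
move=> Uop ab01; set U1 := [set x | _]; exists U1; split; last first.
  by apply/seteqP; split => x; [move=> U1x; split => //; case: U1x | case].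
split; first by move=> x [/hS1].
move=> sg Ksg x1 x1cl [S1x1 hx1].
pose P d s := 0 <= s <= 1 -> forall y, S1 y -> closed_simplex K1 sg y ->
  (forall v, sg v -> `|y v - x1 v| < d) -> U (H (s, y)).
have [d1 d10 hd1] : exists2 d, 0 < d & forall s, a <= s <= b -> P d s.
  apply: segment_uniform => s sab.
  have [d dpos hd] := cyl_local Uop Ksg (ab01 s sab) S1x1 x1cl (hx1 s sab).
  exists d => // s' d' hs' /andP[_ d'd] s'01 y S1y ycl hy.
  by apply: hd => // v sv; exact: lt_trans (hy v sv) d'd.
have [d2 d20 hd2] := hS1o Ksg S1x1 x1cl.
exists (Num.min d1 d2); split => [|y ycl hy]; first by rewrite lt_min d10 d20.
have S1y : S1 y by apply: hd2 => // v /hy; rewrite lt_min => /andP[].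
split => // s sab; apply: hd1 => //; first exact: ab01.
by move=> v /hy; rewrite lt_min => /andP[].
Qed.

(* Continuity criterion for homotopies [0,1] x S1 -> S2: around (s0, x0),
   take the tube over the time-window [s0 - e, s0 + e] (cut to [0,1]). *)
Lemma cont_cylinder :
  cont (cyl S1) (cyl_open S1 (sub_open (realization_open K1) S1)) S2
    (sub_open (realization_open K2) S2) H.
Proof.
split; first by move=> [s x] [/= s01 S1x]; apply: hmap.
move=> W [U [Uop ->]]; split; first by move=> p [].
move=> [s0 x0] [[/= s01 S1x0] [Ux0 _]].
have x0cl : closed_simplex K1 (supp x0) x0 by split => //; exact: hS1.
have Ks0 : K1 (supp x0) by case: (hS1 S1x0) => _ [].
have [d0 d00 hd0] := cyl_local Uop Ks0 s01 S1x0 x0cl Ux0.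
pose e := d0 / 2; have e0 : 0 < e by rewrite divr_gt0.
have ed0 : e < d0 by rewrite /e; lra.
pose a := Num.max 0 (s0 - e); pose b := Num.min 1 (s0 + e).
have window s : a <= s <= b <-> 0 <= s <= 1 /\ `|s - s0| <= e.
  rewrite /a /b ge_max le_min ler_distl.
  split => [/andP[/andP[-> ->] /andP[-> ->]] | [/andP[-> ->] /andP[-> ->]]] //.
exists e; split => //; exists [set x | S1 x /\ forall s, a <= s <= b -> U (H (s, x))].
split; last split.
- by apply: tube_open => // s /window [].
- split => // s /window [s01' hs]; apply: hd0 => //; first exact: le_lt_trans hs ed0.
  by move=> v _; rewrite subrr normr0.
- move=> s x s01' hs [S1x hx]; do 2!split => //; last exact: hmap.
  by apply: hx; apply/window; split => //; exact: ltW.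
Qed.
End Cylinder.
End RealizationMaps.
Existing Instances simplex_ball_filter cyl_ball_filter.

Section SimplicialDifference.
Variables (R : realType) (V : choiceType) (G : finGroupType)
  (X A : set (set V)) (act : G -> V -> V).
Hypotheses (hX : is_simplicial_complex X) (hA : is_subcomplex A X)
  (hG : is_group_action act) (hPX : preserves_complex act X)
  (hPA : preserves_complex act A).
Implicit Types (r s : set V) (t x y : V -> R) (T : set V -> R).

Local Notation vertex := (sdiff_vertex X A).

Lemma X_finite s : X s -> finite_set s.
Proof. by case/(hX.1). Qed.

Lemma vertex_X r : vertex r -> X r. Proof. by case. Qed.
Lemma vertex_notA r : vertex r -> ~ A r. Proof. by case=> _ []. Qed.
Lemma vertex_finite r : vertex r -> finite_set r.
Proof. by move/vertex_X/X_finite. Qed.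
Lemma vertex_neq0 r : vertex r -> r !=set0.
Proof. by move/vertex_X/(hX.1) => []. Qed.

Lemma notA_super r s : ~ A r -> r `<=` s -> r !=set0 -> ~ A s.
Proof. by move=> nAr rs r0 As; apply: nAr; apply: (hA.1.2 s). Qed.

Lemma exists_vertex s : X s -> ~ A s -> exists r, vertex r /\ r `<=` s.
Proof.
move=> Xs nAs.
have [r [[Xr nAr] rs rmin]] :=
  exists_minimal (P := fun q => X q /\ ~ A q) (X_finite Xs) (conj Xs nAs).
by exists r; split => //; split => //; split => // q Xq nAq; exact: rmin.
Qed.

Lemma diff_notA t : diff_space X A t -> ~ A (supp t).
Proof. by move=> [[t0 [Xt t1]] nAt] At; apply: nAt. Qed.

Lemma diff_finite t : diff_space X A t -> finite_set (supp t).
Proof. by move=> [/realization_supp/X_finite]. Qed.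

Lemma diff_of y r : realization X y -> ~ A r -> r `<=` supp y -> r !=set0 ->
  diff_space X A y.
Proof. by move=> ry nAr ry0 r0; split => // [[_ [/(notA_super nAr ry0 r0)]]]. Qed.

(* |X| - |A| is open in every closed simplex: near a point x, coordinates
   that are positive at x stay positive, so the support can only grow. *)
Lemma diff_simplexwise_open : simplexwise_open X (@diff_space R V X A).
Proof.
move=> sg x Xsg dx xcl.
have : \forall y \near radius_filter (simplex_ball (closed_simplex X sg) sg x),
    forall v, supp x v -> 0 < y v.
  apply: near_finite; first exact: diff_finite.
  move=> v sxv; have [[x0 _] _] := dx; have xv0 : 0 < x v by apply: supp_gt0.
  move: (simplex_ball_coord (v := v) (fun _ h => h) xcl).
  move/cvgrPdist_lt => /(_ (x v) xv0); apply: filterS => y.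
  by rewrite ltr_norml => /andP[h1 h2]; lra.
move=> [d d0 hd]; exists d => // y ycl hy; have [ry _] := ycl.
apply: (diff_of ry (diff_notA dx)) => [v sxv|].
  by rewrite /supp /= gt_eqF //; exact: hd.
by case: (hX.1 _ (realization_supp dx.1)).
Qed.

Lemma sdiff_complex : is_simplicial_complex (sdiff X A).
Proof.
split; first by move=> S [fS [S0 _]].
move=> S S' [fS [S0 [SV XU]]] S'S S'0; split; first exact: sub_finite_set fS.
split => //; split; first exact: subset_trans S'S SV.
apply: (hX.2 _ _ XU); first by move=> v [r S'r rv]; exists r => //; apply: S'S.
have [r S'r] := S'0; have [v rv] := vertex_neq0 (SV _ (S'S _ S'r)).
by exists v; exists r.
Qed.

Lemma sdiff_of (S : set (set V)) s : finite_set S -> S !=set0 -> S `<=` vertex ->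
  X s -> \bigcup_(r in S) r `<=` s -> sdiff X A S.
Proof.
move=> fS S0 SV Xs Us; do 3!split => //; apply: (hX.2 _ _ Xs Us).
have [r Sr] := S0; have [v rv] := vertex_neq0 (SV _ Sr).
by exists v; exists r.
Qed.

Lemma sdiff_finite (S : set (set V)) : sdiff X A S -> finite_set S.
Proof. by case. Qed.
Lemma sdiff_X (S : set (set V)) : sdiff X A S -> X (\bigcup_(r in S) r).
Proof. by case=> _ [_ []]. Qed.
Lemma sdiff_vertices (S : set (set V)) : sdiff X A S -> S `<=` vertex.
Proof. by case=> _ [_ []]. Qed.

Definition vertices_in s : set (set V) := [set r | vertex r /\ r `<=` s].

Lemma vertices_in_finite s : finite_set s -> finite_set (vertices_in s).
Proof. by move=> fs; apply: sub_finite_set (finite_subsets fs) => r []. Qed.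

Lemma sdiff_vertices_in s : X s -> ~ A s -> sdiff X A (vertices_in s).
Proof.
move=> Xs nAs; apply: (sdiff_of _ _ _ Xs).
- exact: vertices_in_finite (X_finite Xs).
- by have [r [Vr rs]] := exists_vertex Xs nAs; exists r.
- by move=> r [].
- by move=> v [r [_ rs] rv]; apply: rs.
Qed.

(* The map f : |X| - |A| -> |X ⊖ A|.  The weight of a vertex r of X ⊖ A at t
   is the product of the coordinates of t on r; it is positive exactly when
   r lies in the support of t. *)
Definition weight r t : R :=
  if `[< vertex r >] then \big[*%R/1]_(v \in r) t v else 0.

Definition total_weight t : R := \sum_(r \in [set: set V]) weight r t.

Definition to_sdiff t : set V -> R := fun r => weight r t / total_weight t.

Lemma weight_eq0 r t : ~ (r `<=` supp t) -> weight r t = 0.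
Proof.
rewrite /weight; case: asboolP => // Vr rt.
have [v [rv ntv]] : exists v, r v /\ ~ supp t v.
  by apply: contrapT => nex; apply: rt => v rv; apply: contrapT => ntv; apply: nex; exists v.
by rewrite (fsbigD1 v) //= ?(not_supp ntv) ?mul0r //; exact: vertex_finite.
Qed.

Lemma weight_ge0 r t : (forall v, 0 <= t v) -> 0 <= weight r t.
Proof.
move=> t0; rewrite /weight; case: asboolP => // Vr.
by rewrite fsbig_finite ?prodr_ge0 //; exact: vertex_finite.
Qed.

Lemma weight_gt0 r t : (forall v, 0 <= t v) -> vertex r -> r `<=` supp t ->
  0 < weight r t.
Proof.
move=> t0 Vr rt; rewrite /weight; case: asboolP => // _.
rewrite fsbig_finite; last exact: vertex_finite.
rewrite big_seq prodr_gt0 // => v; rewrite in_fset_set ?inE; last exact: vertex_finite.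
by move=> rv; apply: supp_gt0 => //; exact: rt.
Qed.

Lemma weight_neq0 r t : weight r t != 0 -> vertex r /\ r `<=` supp t.
Proof.
move=> w0; split; first by move: w0; rewrite /weight; case: asboolP; rewrite ?eqxx.
by apply: contrapT => nrt; move: w0; rewrite weight_eq0 // eqxx.
Qed.

Lemma total_weight_expand t s : finite_set s -> supp t `<=` s ->
  total_weight t = \sum_(r \in [set r : set V | r `<=` s]) weight r t.
Proof.
move=> fs ts; apply/esym/fsbig_widen => // r [_ nrs].
by apply: weight_eq0 => rt; apply: nrs; exact: subset_trans rt ts.
Qed.

(* On |X| - |A| the support contains a vertex of X ⊖ A, so D(t) > 0. *)
Lemma total_weight_gt0 t : diff_space X A t -> 0 < total_weight t.
Proof.
move=> dt; have [rt _] := dt; have [t0 _] := rt.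
have [r [Vr rs]] := exists_vertex (realization_supp rt) (diff_notA dt).
have fs := diff_finite dt.
rewrite (total_weight_expand fs (@subset_refl _ (supp t))).
apply: lt_le_trans (weight_gt0 t0 Vr rs) _.
by apply: (sum_ge_term (finite_subsets fs) rs) => q _; exact: weight_ge0.
Qed.

Lemma supp_to_sdiff t : diff_space X A t -> supp (to_sdiff t) = vertices_in (supp t).
Proof.
move=> dt; have D0 := total_weight_gt0 dt; have [[t0 _] _] := dt.
apply/seteqP; split => r.
  rewrite /supp /to_sdiff /= => w0; apply: weight_neq0.
  by apply: contraNN w0 => /eqP ->; rewrite mul0r.
by move=> [Vr rs]; rewrite /supp /to_sdiff /= gt_eqF // divr_gt0 // weight_gt0.
Qed.

Lemma to_sdiff_realization t : diff_space X A t -> realization (sdiff X A) (to_sdiff t).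
Proof.
move=> dt; have D0 := total_weight_gt0 dt; have [[t0 [Xt _]] nAt] := dt.
split; first by move=> r; rewrite /to_sdiff divr_ge0 ?weight_ge0 // ltW.
rewrite supp_to_sdiff //; split; first exact: sdiff_vertices_in (diff_notA dt).
rewrite -(supp_to_sdiff dt) (fsbig_widen _ [set: set V]) //; last first.
  by move=> r [_]; exact: not_supp.
by rewrite /to_sdiff -mulr_fsuml -/(total_weight t) divff // gt_eqF.
Qed.

(* The map h : |X ⊖ A| -> |X| - |A| sends the vertex r of X ⊖ A to the
   barycentre of the simplex r, and is affine on simplices of X ⊖ A. *)
Definition cardR r : R := \sum_(v \in r) (1 : R).

Definition barycentre r (v : V) : R := if `[< r v >] then (cardR r)^-1 else 0.

Definition from_sdiff T : V -> R :=
  fun v => \sum_(r \in supp T) T r * barycentre r v.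

Lemma cardR_gt0 r : finite_set r -> r !=set0 -> 0 < cardR r.
Proof.
by move=> fr [v rv]; apply: lt_le_trans ltr01 (sum_ge_term fr rv (fun _ _ => ler01)).
Qed.

Lemma barycentre_ge0 r v : 0 <= barycentre r v.
Proof.
rewrite /barycentre; case: asboolP => // _; rewrite invr_ge0.
by apply: fsumr_ge0.
Qed.

Lemma barycentre_gt0 r v : finite_set r -> r v -> 0 < barycentre r v.
Proof.
move=> fr rv; rewrite /barycentre; case: asboolP => // _.
by rewrite invr_gt0 cardR_gt0 //; exists v.
Qed.

Lemma barycentre_sum r s : finite_set s -> r `<=` s -> r !=set0 ->
  \sum_(v \in s) barycentre r v = 1.
Proof.
move=> fs rs r0; have fr : finite_set r by apply: sub_finite_set fs.
rewrite -(fsbig_widen r s) //; last by move=> v [_ nrv]; rewrite /= /barycentre; case: asboolP.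
rewrite (eq_fsbigr (fun=> (cardR r)^-1 * 1)); last first.
  by move=> v; rewrite inE /barycentre => rv; case: asboolP; rewrite ?mulr1.
by rewrite -mulr_fsumr -/(cardR r) mulVf // gt_eqF // cardR_gt0.
Qed.

Lemma from_sdiff_expand T (S : set (set V)) v :
  finite_set S -> supp T `<=` S -> from_sdiff T v = \sum_(r \in S) T r * barycentre r v.
Proof.
move=> fS TS; apply: fsbig_widen => // r [_ nr].
by rewrite /= (not_supp nr) mul0r.
Qed.

Lemma supp_from_sdiff T : realization (sdiff X A) T ->
  supp (from_sdiff T) = \bigcup_(r in supp T) r.
Proof.
move=> [T0 [sT _]]; have fT := sdiff_finite sT; have SV := sdiff_vertices sT.
have term0 r v : 0 <= T r * barycentre r v by rewrite mulr_ge0 // barycentre_ge0.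
apply/seteqP; split => v.
  rewrite /supp /= => hv.
  have : 0 < from_sdiff T v.
    by rewrite lt_neqAle eq_sym hv fsumr_ge0.
  move/(@fsumr_gt0 R (set V) [::]) => [r Tr].
  rewrite /barycentre; case: asboolP => [rv _|_]; last by rewrite mulr0 ltxx.
  by exists r.
move=> [r Tr rv]; rewrite /supp /= gt_eqF //.
apply: lt_le_trans (sum_ge_term (F := fun r => T r * barycentre r v) fT Tr _).
  rewrite mulr_gt0 //; first exact: supp_gt0.
  by apply: barycentre_gt0 => //; apply: vertex_finite; apply: SV.
by move=> j _; exact: term0.
Qed.

(* h(T) is a point of |X|, outside |A| since its support contains a vertex
   of X ⊖ A. *)
Lemma from_sdiff_diff T : realization (sdiff X A) T -> diff_space X A (from_sdiff T).
Proof.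
move=> rT; have [T0 [sT T1]] := rT; have fT := sdiff_finite sT.
have SV := sdiff_vertices sT; have XU := sdiff_X sT.
have fU : finite_set (\bigcup_(r in supp T) r) by exact: X_finite.
have [r Tr] := sT.2.1; have r0 := vertex_neq0 (SV _ Tr).
apply: (diff_of _ (vertex_notA (SV _ Tr))) => //; last first.
  by rewrite supp_from_sdiff // => v rv; exists r.
split; first by move=> v; apply: fsumr_ge0 => q _; rewrite mulr_ge0 ?barycentre_ge0.
rewrite supp_from_sdiff //; split => //.
under eq_fsbigr do rewrite /from_sdiff.
rewrite exchange_fsbig // -T1; apply: eq_fsbigr => q; rewrite inE => Tq.
rewrite -mulr_fsumr barycentre_sum ?mulr1 //; first by move=> v qv; exists q.
by apply: vertex_neq0; exact: SV.
Qed.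

Lemma preserves_complex_inv (K : set (set V)) g r :
  preserves_complex act K -> K (act g @` r) -> K r.
Proof. by move=> hK /(hK (g^-1)%g); rewrite (image_gactionK hG). Qed.

Lemma vertex_act_of g r : vertex r -> vertex (act g @` r).
Proof.
move=> [Xr [nAr rmin]]; split; first exact: hPX.
split; first by move/(preserves_complex_inv hPA).
move=> q Xq nAq qr.
have qr' : act (g^-1)%g @` q `<=` r.
  by move=> v [w qw <-]; move/(image_gactionE hG): (qr _ qw).
rewrite -(rmin _ (hPX (g^-1)%g Xq) _ qr').
  by have := image_gactionK hG (g^-1)%g q; rewrite invgK.
by move/(preserves_complex_inv hPA).
Qed.

Lemma vertex_act g r : vertex (simplex_act act g r) <-> vertex r.
Proof.
split; last exact: vertex_act_of.
by move/(vertex_act_of (g^-1)%g); rewrite /simplex_act (image_gactionK hG).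
Qed.

(* f commutes with G: translating t permutes the weights. *)
Lemma weight_act g r t :
  weight r (real_act act g t) = weight (simplex_act act (g^-1)%g r) t.
Proof.
rewrite /weight (asbool_equiv_eq (vertex_act (g^-1)%g r)).
case: asboolP => // _; rewrite /simplex_act fsbig_image //.
by move=> v w _ _; apply: (gaction_inj hG).
Qed.

Lemma total_weight_act g t : total_weight (real_act act g t) = total_weight t.
Proof.
rewrite /total_weight; under eq_fsbigr do rewrite weight_act.
rewrite -(reindex_fsbigT (simplex_act act (g^-1)%g) (fun r => weight r t)) //.
have hS := simplex_act_action hG.
by exists (simplex_act act g) => r; rewrite ?(gactionKV hS) ?(gactionVK hS).
Qed.

Lemma to_sdiff_equivariant g t :
  to_sdiff (real_act act g t) = real_act (simplex_act act) g (to_sdiff t).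
Proof. by apply/funext => r; rewrite /to_sdiff weight_act total_weight_act. Qed.

(* h commutes with G: barycentres are carried along by the action. *)
Lemma barycentre_act g r w :
  barycentre (act g @` r) w = barycentre r (act (g^-1)%g w).
Proof.
have cardE : cardR (act g @` r) = cardR r.
  by rewrite /cardR fsbig_image // => v u _ _; apply: (gaction_inj hG).
by rewrite /barycentre cardE (asbool_equiv_eq (image_gactionE hG g r w)).
Qed.

Lemma from_sdiff_equivariant g T :
  from_sdiff (real_act (simplex_act act) g T) = real_act act g (from_sdiff T).
Proof.
have hS := simplex_act_action hG.
apply/funext => w; rewrite /from_sdiff /real_act (supp_real_act hS).
rewrite fsbig_image; last by move=> r q _ _; apply: (gaction_inj hS).
by apply: eq_fsbigr => r _; rewrite (gactionVK hS) /simplex_act barycentre_act.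
Qed.

(* f and h are coordinatewise continuous: each coordinate is eventually a
   fixed finite expression in the coordinates of the argument. *)
Lemma to_sdiff_cvg (I : Type) (F : set_system I) {FF : Filter F}
  (phi : I -> V -> R) x s r :
  finite_set s -> supp x `<=` s -> (\forall i \near F, supp (phi i) `<=` s) ->
  (forall v, (fun i => phi i v) @ F --> x v) -> total_weight x != 0 ->
  (fun i => to_sdiff (phi i) r) @ F --> to_sdiff x r.
Proof.
move=> fs xs hn hc D0.
have wc q : (fun i => weight q (phi i)) @ F --> weight q x.
  rewrite /weight; case: asboolP => Vq; last exact: cvg_cst.
  by apply: cvg_fprod => //; exact: vertex_finite.
have Dc : (fun i => total_weight (phi i)) @ F --> total_weight x.
  have e : {near F, (fun i => \sum_(q \in [set q | q `<=` s]) weight q (phi i))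
      =1 (fun i => total_weight (phi i))}.
    by apply: filterS hn => i ins; rewrite (total_weight_expand fs ins).
  apply: cvg_trans (near_eq_cvg e) _; rewrite (total_weight_expand fs xs).
  by apply: cvg_fsum => //; exact: finite_subsets.
exact: cvgM (wc r) (cvgV D0 Dc).
Qed.

Lemma from_sdiff_cvg (I : Type) (F : set_system I) {FF : Filter F}
  (phi : I -> set V -> R) T (S : set (set V)) w :
  finite_set S -> supp T `<=` S -> (\forall i \near F, supp (phi i) `<=` S) ->
  (forall r, (fun i => phi i r) @ F --> T r) ->
  (fun i => from_sdiff (phi i) w) @ F --> from_sdiff T w.
Proof.
move=> fS TS hn hc.
have e : {near F, (fun i => \sum_(r \in S) phi i r * barycentre r w)
    =1 (fun i => from_sdiff (phi i) w)}.
  by apply: filterS hn => i iS; rewrite (from_sdiff_expand w fS iS).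
apply: cvg_trans (near_eq_cvg e) _; rewrite (from_sdiff_expand w fS TS).
by apply: cvg_fsum => // r; apply: cvgM => //; exact: cvg_cst.
Qed.

(* Continuity of f : |X| - |A| -> |X ⊖ A|: a closed simplex sg of X is sent
   into the closed simplex spanned by the vertices below sg. *)
Lemma cont_to_sdiff :
  cont (diff_space X A) (sub_open (realization_open X) (diff_space X A))
    (realization (sdiff X A))
    (sub_open (realization_open (sdiff X A)) (realization (sdiff X A))) to_sdiff.
Proof.
apply: (cont_realization (K1 := X) sdiff_complex).
- by move=> x [].
- exact: diff_simplexwise_open.
- done.
- by move=> x; exact: to_sdiff_realization.
- move=> sg x Xsg dx xcl; exists (vertices_in sg); split.
    apply: sdiff_vertices_in => //; apply: notA_super (diff_notA dx) xcl.2 _.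
    by case: (hX.1 _ (realization_supp dx.1)).
  move=> y dy ycl; rewrite supp_to_sdiff // => r [Vr rs]; split => //.
  exact: subset_trans rs ycl.2.
- move=> sg x Xsg dx xcl r; apply: (to_sdiff_cvg (s := sg)).
  + exact: X_finite.
  + exact: xcl.2.
  + by apply: (simplex_ball_supp (K1 := X)) => y [].
  + by move=> v; apply: (simplex_ball_coord (K1 := X)) => // y [].
  + by rewrite gt_eqF // total_weight_gt0.
Qed.

(* Continuity of h : |X ⊖ A| -> |X| - |A|: a closed simplex S of X ⊖ A is
   sent into the closed simplex of X spanned by the union of S. *)
Lemma cont_from_sdiff :
  cont (realization (sdiff X A))
    (sub_open (realization_open (sdiff X A)) (realization (sdiff X A)))
    (diff_space X A) (sub_open (realization_open X) (diff_space X A)) from_sdiff.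
Proof.
apply: (cont_realization (K1 := sdiff X A) hX).
- done.
- exact: realization_simplexwise_open.
- by move=> y [].
- by move=> T; exact: from_sdiff_diff.
- move=> S T KS rT Tcl; exists (\bigcup_(r in S) r); split; first exact: sdiff_X.
  move=> T' rT' T'cl; rewrite supp_from_sdiff // => v [r T'r rv].
  by exists r => //; exact: T'cl.2.
- move=> S T KS rT Tcl w; apply: (from_sdiff_cvg (S := S)).
  + exact: sdiff_finite.
  + exact: Tcl.2.
  + by apply: (simplex_ball_supp (K1 := sdiff X A)) => y [].
  + by move=> r; apply: (simplex_ball_coord (K1 := sdiff X A)) => // y [].
Qed.

(* h ∘ f moves each point within its support, so the straight-line homotopy
   from h ∘ f to the identity stays in |X| - |A| and in each closed simplex. *)
Lemma supp_from_to_sdiff x : diff_space X A x ->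
  supp (from_sdiff (to_sdiff x)) `<=` supp x.
Proof.
move=> dx; rewrite supp_from_sdiff; last exact: to_sdiff_realization.
by move=> v [r]; rewrite supp_to_sdiff // => -[_ rs] /rs.
Qed.

Lemma homotopy_diff_in (s : R) x : 0 <= s <= 1 -> diff_space X A x ->
  diff_space X A (straight_homotopy (fun y => from_sdiff (to_sdiff y)) (s, x)) /\
  supp (straight_homotopy (fun y => from_sdiff (to_sdiff y)) (s, x)) `<=` supp x.
Proof.
move=> s01 dx; have [rx _] := dx.
have dh := from_sdiff_diff (to_sdiff_realization dx).
have [[rc sc] hx hy] := conv_closed_simplex hX (realization_supp rx) s01
  (conj dh.1 (supp_from_to_sdiff dx)) (conj rx (@subset_refl _ (supp x))).
split => //.
have [s_lt1|s_ge1] := ltP s 1.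
  apply: (diff_of rc (diff_notA dh) (hx s_lt1)).
  by case: (hX.1 _ (realization_supp dh.1)).
apply: (diff_of rc (diff_notA dx) (hy _)); last by case: (hX.1 _ (realization_supp rx)).
by move: s01 => /andP[]; lra.
Qed.

Lemma cont_homotopy_diff :
  cont (cyl (diff_space X A))
    (cyl_open (diff_space X A) (sub_open (realization_open X) (diff_space X A)))
    (diff_space X A) (sub_open (realization_open X) (diff_space X A))
    (straight_homotopy (fun y => from_sdiff (to_sdiff y))).
Proof.
apply: (cont_cylinder (K1 := X) hX).
- by move=> x [].
- exact: diff_simplexwise_open.
- by move=> x [].
- by move=> s x s01 dx; case: (homotopy_diff_in s01 dx).
- move=> sg x Xsg dx xcl; exists sg; split => // s y s01 dy ycl.
  exact: subset_trans (homotopy_diff_in s01 dy).2 ycl.2.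
- move=> sg s x Xsg s01 dx xcl w; rewrite /straight_homotopy /conv /=.
  apply: cvg_conv; first exact: cyl_ball_fst.
    apply: (from_sdiff_cvg (S := vertices_in sg)).
    * exact: vertices_in_finite (X_finite Xsg).
    * by rewrite supp_to_sdiff // => r [Vr rs]; split => //; exact: subset_trans rs xcl.2.
    * apply: filterS (cyl_ball_in _ _ _ _) => p [[dp pcl] _].
      by rewrite supp_to_sdiff // => r [Vr rs]; split => //; exact: subset_trans rs pcl.2.
    * move=> r; apply: (to_sdiff_cvg (s := sg) (phi := fun p : R * (V -> R) => p.2)).
      -- exact: X_finite.
      -- exact: xcl.2.
      -- by apply: (cyl_ball_supp (K1 := X)) => y [].
      -- by move=> v; apply: (cyl_ball_coord (K1 := X)) => // y [].
      -- by rewrite gt_eqF // total_weight_gt0.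
  by apply: (cyl_ball_coord (K1 := X)) => // y [].
Qed.

(* f ∘ h keeps a point T of |X ⊖ A| within the closed simplex of the
   vertices below the union of the support of T; so the straight-line
   homotopy from f ∘ h to the identity is well defined. *)
Lemma sdiff_vertices_below (S : set (set V)) :
  sdiff X A S -> sdiff X A (vertices_in (\bigcup_(r in S) r)).
Proof.
move=> SS; have [r Sr] := SS.2.1; have Vr := sdiff_vertices SS Sr.
apply: sdiff_vertices_in; first exact: sdiff_X.
apply: notA_super (vertex_notA Vr) _ (vertex_neq0 Vr).
by move=> v rv; exists r.
Qed.

Lemma closed_vertices_below T (S : set (set V)) :
  realization (sdiff X A) T -> supp T `<=` S ->
  closed_simplex (sdiff X A) (vertices_in (\bigcup_(r in S) r)) T /\
  closed_simplex (sdiff X A) (vertices_in (\bigcup_(r in S) r))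
    (to_sdiff (from_sdiff T)).
Proof.
move=> rT TS; have dh := from_sdiff_diff rT; split.
  split => // r Tr; split; first exact: (sdiff_vertices rT.2.1).
  by move=> v rv; exists r => //; exact: TS.
split; first exact: to_sdiff_realization.
rewrite supp_to_sdiff // supp_from_sdiff // => r [Vr rs]; split => //.
by move=> v /rs [q Tq qv]; exists q => //; exact: TS.
Qed.

Lemma homotopy_sdiff_in sg (s : R) T : 0 <= s <= 1 -> realization (sdiff X A) T ->
  sdiff X A sg -> supp T `<=` sg ->
  closed_simplex (sdiff X A) (vertices_in (\bigcup_(r in sg) r))
    (straight_homotopy (fun U => to_sdiff (from_sdiff U)) (s, T)).
Proof.
move=> s01 rT Ssg Tsg; have [Tcl fhcl] := closed_vertices_below rT Tsg.
by have [] := conv_closed_simplex sdiff_complex (sdiff_vertices_below Ssg) s01 fhcl Tcl.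
Qed.

Lemma cont_homotopy_sdiff :
  cont (cyl (realization (sdiff X A)))
    (cyl_open (realization (sdiff X A))
       (sub_open (realization_open (sdiff X A)) (realization (sdiff X A))))
    (realization (sdiff X A))
    (sub_open (realization_open (sdiff X A)) (realization (sdiff X A)))
    (straight_homotopy (fun U => to_sdiff (from_sdiff U))).
Proof.
apply: (cont_cylinder (K1 := sdiff X A) sdiff_complex).
- done.
- exact: realization_simplexwise_open.
- done.
- move=> s T s01 rT.
  by case: (homotopy_sdiff_in s01 rT rT.2.1 (@subset_refl _ (supp T))).
- move=> sg T Ssg rT Tcl; exists (vertices_in (\bigcup_(r in sg) r)).
  split; first exact: sdiff_vertices_below.
  by move=> s T' s01 rT' T'cl; case: (homotopy_sdiff_in s01 rT' Ssg T'cl.2).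
- move=> sg s T Ssg s01 rT Tcl r; rewrite /straight_homotopy /conv /=.
  have fU : finite_set (\bigcup_(q in sg) q) by apply: X_finite; exact: sdiff_X.
  apply: cvg_conv; first exact: cyl_ball_fst.
    apply: (to_sdiff_cvg (s := \bigcup_(q in sg) q)
      (phi := fun p : R * (set V -> R) => from_sdiff p.2)) => //.
    * by rewrite supp_from_sdiff // => v [q Tq qv]; exists q => //; exact: Tcl.2.
    * apply: filterS (cyl_ball_in _ _ _ _) => p [[rp pcl] _].
      by rewrite supp_from_sdiff // => v [q pq qv]; exists q => //; exact: pcl.2.
    * move=> v; apply: (from_sdiff_cvg (S := sg) (phi := fun p : R * (set V -> R) => p.2)).
      -- exact: sdiff_finite.
      -- exact: Tcl.2.
      -- by apply: (cyl_ball_supp (K1 := sdiff X A)) => y [].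
      -- by move=> q; apply: (cyl_ball_coord (K1 := sdiff X A)) => // y [].
    * by rewrite gt_eqF // total_weight_gt0 //; exact: from_sdiff_diff.
  by apply: (cyl_ball_coord (K1 := sdiff X A)) => // y [].
Qed.
End SimplicialDifference.

(* The topology of |X ⊖ A| is
   first presented as a subspace topology, the form used by cont_realization;
   the carrier (set V -> R) of the statement is only convertible to that of
   the lemmas, hence the plain exact. *)
Theorem theorem4p8 (R : realType) (V : choiceType) (G : finGroupType)
  (X A : set (set V)) (act : G -> V -> V) :
  is_simplicial_complex X ->
  is_subcomplex A X ->
  is_group_action act ->
  preserves_complex act X ->
  preserves_complex act A ->
  @G_homotopy_equivalent R G (V -> R) (set V -> R)
    (diff_space X A) (sub_open (realization_open X) (diff_space X A))
    (real_act act)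
    (realization (sdiff X A)) (realization_open (sdiff X A))
    (real_act (simplex_act act)).
Proof.
move=> hX hA hG hPX hPA; rewrite (realization_open_subspace R (sdiff X A)).
exists (@to_sdiff R V X A), (@from_sdiff R V).
split; first exact (cont_to_sdiff R hX hA).
split; first exact (cont_from_sdiff R hX hA).
split; first by move=> g x _; exact (to_sdiff_equivariant hG hPX hPA g x).
split; first by move=> g T _; exact (from_sdiff_equivariant hG g T).
split.
  exists (straight_homotopy (fun x => from_sdiff (to_sdiff X A x))).
  split; first exact (cont_homotopy_diff R hX hA).
  split; first by move=> x _; exact: straight_homotopy_ends.
  move=> g s x _ _; apply: straight_homotopy_equivariant => {}g {}x.
  by rewrite (to_sdiff_equivariant hG hPX hPA) (from_sdiff_equivariant hG).
exists (straight_homotopy (fun T => to_sdiff X A (from_sdiff T))).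
split; first exact (cont_homotopy_sdiff R hX hA).
split; first by move=> T _; exact: straight_homotopy_ends.
move=> g s T _ _; apply: straight_homotopy_equivariant => {}g {}T.
by rewrite (from_sdiff_equivariant hG) (to_sdiff_equivariant hG hPX hPA).
Qed.
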